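(* Let $(a_n)_{\mathrm c}\in\widetilde{\mathbb C}_{\mathrm c}$ and $c\in\widetilde{\mathbb C}$. Then there exists $q\in\mathbb N$ such that $B_{\mathrm d\rho^q}(c)\subseteq S((a_n)_{\mathrm c},c)$.
   Context: Fix $I=(0,1]$ and a gauge $\rho=(\rho_\varepsilon)_{\varepsilon\in I}$ with $\rho_\varepsilon\in I$ and $\rho_\varepsilon\to0$ as $\varepsilon\to0$. ''$\forall^0\varepsilon$'' means ''for all sufficiently small $\varepsilon\in I$''. A net $(x_\varepsilon)\in\mathbb C^I$ is $\rho$-moderate ($(x_\varepsilon)\in\mathbb C_\rho$) if $\exists N\in\mathbb N\,\forall^0\varepsilon:|x_\varepsilon|\le\rho_\varepsilon^{-N}$, and $\rho$-negligible if $\forall q\in\mathbb N\,\forall^0\varepsilon:|x_\varepsilon|\le\rho_\varepsilon^q$. $\widetilde{\mathbb C}:=\mathbb C_\rho/\{\text{negligible nets}\}$ with classes $[x_\varepsilon]$; $\widetilde{\mathbb R}\subseteq\widetilde{\mathbb C}$ consists of classes of real moderate nets; $\mathrm d\rho:=[\rho_\varepsilon]$, $|[z_\varepsilon]|:=[|z_\varepsilon|]$. On $\widetilde{\mathbb R}$: $[x_\varepsilon]\le[y_\varepsilon]$ iff $x_\varepsilon\le y_\varepsilon+z_\varepsilon$ $\forall^0\varepsilon$ for some negligible $(z_\varepsilon)$; $x<y$ iff $\exists m\,\forall^0\varepsilon:y_\varepsilon-x_\varepsilon>\rho_\varepsilon^m$; $\widetilde{\mathbb R}_{>0}:=\{x:x>0\}$.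 $B_r(c):=\{z\in\widetilde{\mathbb C}:|z-c|<r\}$ for $r\in\widetilde{\mathbb R}_{>0}$ (these balls generate the sharp topology). Hypernatural numbers: $\widetilde{\mathbb N}:=\{[n_\varepsilon]\in\widetilde{\mathbb R}:n_\varepsilon\in\mathbb N\ \forall\varepsilon\}$; for each $N\in\widetilde{\mathbb N}$ a representative $(\mathrm{ni}(N)_\varepsilon)$ with all $\mathrm{ni}(N)_\varepsilon\in\mathbb N$ is fixed. Hyperlimit: $l=\lim_{n\in\widetilde{\mathbb N}}a_n$ means $\forall q\,\exists M\in\widetilde{\mathbb N}\,\forall n\in\widetilde{\mathbb N}:n\ge M\Rightarrow|a_n-l|<\mathrm d\rho^q$. Hyperseries: a net $(a_{n\varepsilon})_{n\in\mathbb N,\varepsilon\in I}$ is moderate over hypersums if for every $N\in\widetilde{\mathbb N}$ the net $(\sum_{n=0}^{\mathrm{ni}(N)_\varepsilon}a_{n\varepsilon})_\varepsilon$ is $\rho$-moderate; two such nets are equivalent if for all $N,M\in\widetilde{\mathbb N}$ the net $(\sum_{n=\mathrm{ni}(N)_\varepsilon}^{\mathrm{ni}(M)_\varepsilon}(a_{n\varepsilon}-\bar a_{n\varepsilon}))_\varepsilon$ is negligible; the quotient is $\widetilde{\mathbb C}_{\mathrm s}$ with classes $[a_{n\varepsilon}]_{\mathrm s}$. $\sum_{n=N}^Ma_n:=[\sum_{n=\mathrm{ni}(N)_\varepsilon}^{\mathrm{ni}(M)_\varepsilon}a_{n\varepsilon}]$, and $\sum_{n\in\widetilde{\mathbb N}}a_n:=\lim_{N\in\widetilde{\mathbb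 N}}\sum_{n=0}^Na_n$ when this hyperlimit exists (convergence). Coefficients: $\widetilde{\mathbb C}_{\mathrm c}$ is the set of weakly $\rho$-moderate nets $(a_{n\varepsilon})$ ($\exists Q,R\in\mathbb N\,\forall^0\varepsilon\,\forall n\in\mathbb N:|a_{n\varepsilon}|\le\rho_\varepsilon^{-nQ-R}$) modulo strong equivalence ($\forall q,r\,\forall^0\varepsilon\,\forall n:|a_{n\varepsilon}-\bar a_{n\varepsilon}|\le\rho_\varepsilon^{nq+r}$), classes $(a_n)_{\mathrm c}=[a_{n\varepsilon}]_{\mathrm c}$. $\widetilde{\mathbb R}_\infty:=(\mathbb R\cup\{\pm\infty\})^I/\sim_\rho$ (same negligibility relation), ordered by $x\le y$ iff some representatives satisfy $x_\varepsilon\le y_\varepsilon$ $\forall^0\varepsilon$, and for $x\in\widetilde{\mathbb R}$, $x<y$ iff $\exists m\,\forall^0\varepsilon:y_\varepsilon>x_\varepsilon+\rho_\varepsilon^m$. Radius: $\mathrm{rad}(a_n)_{\mathrm c}:=[(\limsup_n|a_{n\varepsilon}|^{1/n})^{-1}]\in\widetilde{\mathbb R}_\infty$. Set of convergence: $S((a_n)_{\mathrm c},c)$ is the set of $z\in\widetilde{\mathbb C}$ with $|z-c|<\mathrm{rad}(a_n)_{\mathrm c}$ for which there exist representatives $z=[z_\varepsilon]$, $c=[c_\varepsilon]$, $(a_n)_{\mathrm c}=[a_{n\varepsilon}]_{\mathrm c}$ such that: (a) the net $(a_{n\varepsilon}(z_\varepsilon-c_\varepsilon)^n)_{n,\varepsilon}$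 is moderate over hypersums (its class $(a_n(z-c)^n)_n\in\widetilde{\mathbb C}_{\mathrm s}$ is called a formal hyperpower series); (b) the hyperseries $\sum_{n\in\widetilde{\mathbb N}}a_n(z-c)^n$ converges and equals $[\sum_{n=0}^{\infty}a_{n\varepsilon}(z_\varepsilon-c_\varepsilon)^n]$ (these ordinary series converging for small $\varepsilon$ to a moderate net); (c) for every representative $z=[\hat z_\varepsilon]$, the net $(\sum_{n\ge1}na_{n\varepsilon}(\hat z_\varepsilon-c_\varepsilon)^{n-1})_\varepsilon$ (derivative of the $\varepsilon$-wise power series at $\hat z_\varepsilon$) is $\rho$-moderate. *)

From Stdlib Require Import Reals.
From Coquelicot Require Import Coquelicot.
Open Scope R_scope.

(* Nets are functions R -> X; only the values at e in I = (0,1] are ever used. *)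

Definition ev (P : R -> Prop) : Prop :=
  exists e0 : R, 0 < e0 /\ forall e : R, 0 < e -> e <= e0 -> e <= 1 -> P e.

Definition is_gauge (rho : R -> R) : Prop :=
  (forall e : R, 0 < e <= 1 -> 0 < rho e <= 1) /\
  (forall eta : R, 0 < eta -> exists d : R, 0 < d /\
     forall e : R, 0 < e < d -> e <= 1 -> rho e < eta).

Definition moderate (rho : R -> R) (x : R -> C) : Prop :=
  exists N : nat, ev (fun e => Cmod (x e) <= / (rho e ^ N)%R).
Definition negligible (rho : R -> R) (x : R -> C) : Prop :=
  forall q : nat, ev (fun e => (Cmod (x e) <= rho e ^ q)%R).
Definition Rmoderate (rho : R -> R) (x : R -> R) : Prop :=
  exists N : nat, ev (fun e => Rabs (x e) <= / (rho e ^ N)%R).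
Definition Rnegligible (rho : R -> R) (x : R -> R) : Prop :=
  forall q : nat, ev (fun e => Rabs (x e) <= rho e ^ q).

Definition same_class (rho : R -> R) (x y : R -> C) : Prop :=
  negligible rho (fun e => (x e - y e)%C).

Definition Rt_le (rho : R -> R) (x y : R -> R) : Prop :=
  exists z : R -> R, Rnegligible rho z /\ ev (fun e => x e <= y e + z e).
Definition Rt_lt (rho : R -> R) (x y : R -> R) : Prop :=
  exists m : nat, ev (fun e => y e - x e > rho e ^ m).
Definition Rt_lt_inf (rho : R -> R) (x : R -> R) (y : R -> Rbar) : Prop :=
  exists m : nat, ev (fun e => Rbar_lt (Finite (x e + rho e ^ m)) (y e)).

(* hypernatural numbers, given by a representative with values in nat
   (which is moderate as a real net) *)
Definition hypernat (rho : R -> R) (n : R -> nat) : Prop :=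
  Rmoderate rho (fun e => INR (n e)).

Fixpoint csum (f : nat -> C) (n : nat) : C :=
  match n with
  | O => f O
  | S k => (csum f k + f (S k))%C
  end.
Definition moderate_hypersums (rho : R -> R) (a : nat -> R -> C) : Prop :=
  forall N : R -> nat, hypernat rho N ->
    moderate rho (fun e => csum (fun n => a n e) (N e)).

Definition hyperseries_lim (rho : R -> R) (a : nat -> R -> C) (l : R -> C) : Prop :=
  forall q : nat, exists M : R -> nat, hypernat rho M /\
    forall n : R -> nat, hypernat rho n ->
      Rt_le rho (fun e => INR (M e)) (fun e => INR (n e)) ->
      Rt_lt rho (fun e => Cmod (csum (fun k => a k e) (n e) - l e)%C)
                (fun e => rho e ^ q).

Definition weakly_moderate (rho : R -> R) (a : nat -> R -> C) : Prop :=
  exists Q Rr : nat, ev (fun e => forall n : nat,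
    Cmod (a n e) <= / (rho e ^ (n * Q + Rr))).
Definition strongly_equiv (rho : R -> R) (a b : nat -> R -> C) : Prop :=
  forall q r : nat, ev (fun e => forall n : nat,
    Cmod (a n e - b n e)%C <= rho e ^ (n * q + r)).

Definition nroot (n : nat) (x : R) : R :=
  if Req_EM_T x 0 then 0 else Rpower x (/ INR n).

Definition Rbar_recip (l : Rbar) : Rbar :=
  match l with
  | Finite r => if Req_EM_T r 0 then p_infty else Finite (/ r)
  | p_infty => Finite 0
  | m_infty => p_infty
  end.

Definition rad (a : nat -> R -> C) : R -> Rbar :=
  fun e => Rbar_recip (LimSup_seq (fun n => nroot n (Cmod (a n e)))).

Definition in_S (rho : R -> R) (a : nat -> R -> C) (c z : R -> C) : Prop :=
  Rt_lt_inf rho (fun e => Cmod (z e - c e)%C) (rad a) /\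
  exists (z' c' : R -> C) (a' : nat -> R -> C),
    same_class rho z' z /\ same_class rho c' c /\
    weakly_moderate rho a' /\ strongly_equiv rho a' a /\
    moderate_hypersums rho (fun n e => (a' n e * Cpow (z' e - c' e) n)%C) /\
    (exists l : R -> C, moderate rho l /\
       ev (fun e => is_series (fun n => (a' n e * Cpow (z' e - c' e) n)%C) (l e)) /\
       hyperseries_lim rho (fun n e => (a' n e * Cpow (z' e - c' e) n)%C) l) /\
    (forall zh : R -> C, same_class rho zh z' ->
       exists d : R -> C, moderate rho d /\
         ev (fun e => is_series
               (fun n => (RtoC (INR (S n)) * a' (S n) e * Cpow (zh e - c' e) n)%C) (d e))).

(* Write w = z - c and let |a_n| <= rho^-(nQ+R) be the weak moderateness bound.  On the
   ball |w| < rho^(Q+3) every term satisfies |a_n w^n| <= rho^-R (rho/2)^n, and likewise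
   |(n+1) a_(n+1) w^n| <= rho^-(Q+R) 2^-n, uniformly in e.  Domination by these geometric
   series gives, e-wise, convergence with sums and partial sums bounded by 2 rho^-R
   (moderateness), tails after N terms bounded by rho^(N+1-R) (the hyperlimit, with a
   constant hypernatural threshold), and rad >= rho^(Q+1).  One can take the given
   representatives themselves as the representatives required by S. *)

From Stdlib Require Import Reals Lra Lia Psatz ClassicalEpsilon.
From Coquelicot Require Import Coquelicot.
Open Scope R_scope.

Lemma pow_le_pow_le1 (r : R) (m n : nat) : 0 <= r <= 1 -> (m <= n)%nat -> r ^ n <= r ^ m.
Proof.
  intros Hr Hmn. induction Hmn as [|n Hmn IH]; [lra|].
  simpl. apply Rle_trans with (r ^ n); [|exact IH].
  assert (0 <= r ^ n) by (apply pow_le; lra). nra.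
Qed.

Lemma INR_S_le_pow2 (n : nat) : INR (S n) <= 2 ^ n.
Proof.
  induction n as [|n IH]; [simpl; lra|].
  rewrite S_INR. change (2 ^ S n) with (2 * 2 ^ n).
  assert (1 <= 2 ^ n) by (apply pow_R1_Rle; lra). lra.
Qed.

Lemma inv_pow_nonneg (r : R) (k : nat) : 0 < r -> 0 <= / r ^ k.
Proof. intros Hr. left. apply Rinv_0_lt_compat, pow_lt, Hr. Qed.

Lemma two_le_inv (r : R) : 0 < r <= 1/2 -> 2 <= / r.
Proof. intros Hr. rewrite <- (Rinv_inv 2). apply Rinv_le_contravar; lra. Qed.

Lemma inv_pow_mul_pow_add (r : R) (Q Rr k n : nat) : 0 < r ->
  / r ^ (n * Q + Rr) * (r ^ (Q + k)) ^ n = / r ^ Rr * (r ^ k) ^ n.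
Proof.
  intros Hr. rewrite <- !pow_mult.
  replace ((Q + k) * n)%nat with (n * Q + k * n)%nat by lia.
  rewrite !pow_add.
  assert (r ^ (n * Q) <> 0) by (apply pow_nonzero; lra).
  assert (r ^ Rr <> 0) by (apply pow_nonzero; lra).
  field; auto.
Qed.

Lemma geom_tail_le (r : R) (Rr q N : nat) :
  0 < r <= 1/2 -> (Rr + q <= N)%nat -> 2 * / r ^ Rr * (r / 2) ^ S N <= r ^ S q.
Proof.
  intros Hr HN.
  replace (r / 2) with (r * (1 / 2)) by lra. rewrite Rpow_mult_distr.
  replace (S N) with (Rr + (S N - Rr))%nat at 1 by lia. rewrite pow_add.
  assert (r ^ Rr <> 0) by (apply pow_nonzero; lra).
  replace (2 * / r ^ Rr * (r ^ Rr * r ^ (S N - Rr) * (1 / 2) ^ S N))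
    with (r ^ (S N - Rr) * (2 * (1 / 2) ^ S N)) by (field; auto).
  assert (Hhalf : 2 * (1 / 2) ^ S N <= 1).
  { simpl. pose proof (pow_le_pow_le1 (1 / 2) 0 N ltac:(lra) ltac:(lia)). simpl in *. lra. }
  assert (Hq : r ^ (S N - Rr) <= r ^ S q) by (apply pow_le_pow_le1; [lra | lia]).
  assert (0 <= r ^ (S N - Rr)) by (apply pow_le; lra).
  assert (0 <= (1 / 2) ^ S N) by (apply pow_le; lra).
  nra.
Qed.

Lemma csum_sum_n (b : nat -> C) (N : nat) : csum b N = sum_n b N.
Proof.
  induction N as [|N IH]; simpl.
  - now rewrite sum_O.
  - now rewrite sum_Sn, IH.
Qed.

Lemma Cmod_sub_lim_le (u : nat -> C) (x L : C) (B : R) :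
  filterlim u eventually (locally L) ->
  eventually (fun d => Cmod (x - u d)%C <= B) -> Cmod (x - L)%C <= B.
Proof.
  intros Hu HB.
  assert (Hcont : continuous (fun y : C => norm (minus x y)) L).
  { apply continuous_comp; [|apply filterlim_norm].
    apply (continuous_minus (fun _ : C => x) (fun y : C => y));
      [apply continuous_const | apply continuous_id]. }
  apply (filterlim_le (F := eventually) _ (fun _ => B) (Cmod (x - L)%C) B HB).
  - exact (filterlim_comp _ _ _ _ _ _ _ _ Hu Hcont).
  - apply filterlim_const.
Qed.

Section Geometric_domination.

Variables (b : nat -> C) (K s : R).
Hypothesis HK : 0 <= K.
Hypothesis Hs : 0 <= s <= 1/2.
Hypothesis Hb : forall n, Cmod (b n) <= K * s ^ n.

Lemma csum_block_bound (N d : nat) :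
  Cmod (csum b (N + d) - csum b N)%C <= 2 * K * s ^ S N - 2 * K * s ^ S (N + d).
Proof.
  induction d as [|d IH].
  - rewrite Nat.add_0_r.
    replace (csum b N - csum b N)%C with (RtoC 0) by ring. rewrite Cmod_0. lra.
  - replace (N + S d)%nat with (S (N + d)) by lia. simpl csum.
    replace (csum b (N + d) + b (S (N + d)) - csum b N)%C
      with ((csum b (N + d) - csum b N) + b (S (N + d)))%C by ring.
    eapply Rle_trans; [apply Cmod_triangle|].
    pose proof (Hb (S (N + d))) as Hbn. simpl in *.
    assert (0 <= s ^ (N + d)) by (apply pow_le; lra).
    assert (0 <= K * (s * s ^ (N + d))) by (apply Rmult_le_pos; nra).
    nra.
Qed.

Lemma csum_block_le (N d : nat) :
  Cmod (csum b (N + d) - csum b N)%C <= 2 * K * s ^ S N.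
Proof.
  pose proof (csum_block_bound N d).
  assert (0 <= K * s ^ S (N + d)) by (apply Rmult_le_pos; [|apply pow_le]; lra).
  lra.
Qed.

Lemma csum_geom_bound (N : nat) : Cmod (csum b N) <= 2 * K.
Proof.
  replace (csum b N) with (b O + (csum b (0 + N) - csum b 0))%C by (simpl; ring).
  eapply Rle_trans; [apply Cmod_triangle|].
  pose proof (Hb O). pose proof (csum_block_le 0 N). simpl in *. nra.
Qed.

Lemma ex_series_geom_dominated : ex_series b.
Proof.
  apply (ex_series_le b (fun n => K * s ^ n)); [exact Hb|].
  apply (ex_series_ext (fun n => scal (s ^ n) K)); [intros n; apply Rmult_comm|].
  apply ex_series_scal_r, ex_series_geom. rewrite Rabs_pos_eq; lra.
Qed.

Lemma is_series_tail_bound (L : C) (N : nat) :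
  is_series b L -> Cmod (csum b N - L)%C <= 2 * K * s ^ S N.
Proof.
  intros HL. apply (Cmod_sub_lim_le (sum_n b)); [exact HL|].
  exists N. intros d Hd. rewrite <- csum_sum_n.
  replace d with (N + (d - N))%nat by lia.
  rewrite <- Cmod_opp. replace (- (csum b N - csum b (N + (d - N))))%C
    with (csum b (N + (d - N)) - csum b N)%C by ring.
  apply csum_block_le.
Qed.

Lemma is_series_geom_bound (L : C) : is_series b L -> Cmod L <= 2 * K.
Proof.
  intros HL. replace L with (b O - (csum b 0 - L))%C by (simpl; ring).
  eapply Rle_trans; [apply Cmod_triangle|]. rewrite Cmod_opp.
  pose proof (Hb O). pose proof (is_series_tail_bound L 0 HL). simpl in *. nra.
Qed.

End Geometric_domination.

Lemma series_sum_net (f : R -> nat -> C) :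
  exists l : R -> C, forall e, ex_series (f e) -> is_series (f e) (l e).
Proof.
  exists (fun e => epsilon (inhabits (RtoC 0)) (is_series (f e))).
  intros e [L HL]. apply epsilon_spec. now exists L.
Qed.

Section Coefficient_bounds.

Variables (A : nat -> C) (w : C) (r : R) (Q Rr : nat).
Hypothesis Hr : 0 < r <= 1/2.
Hypothesis HA : forall n, Cmod (A n) <= / r ^ (n * Q + Rr).
Hypothesis Hw : Cmod w <= r ^ (Q + 3).

Lemma coef_pow_le (m n : nat) :
  Cmod (A m) * Cmod w ^ n <= / r ^ (m * Q + Rr) * (r ^ (Q + 3)) ^ n.
Proof.
  apply Rmult_le_compat; [apply Cmod_ge_0 | apply pow_le, Cmod_ge_0 | apply HA |].
  apply pow_incr. split; [apply Cmod_ge_0 | exact Hw].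
Qed.

Lemma power_term_geom_bound (n : nat) :
  Cmod (A n * Cpow w n)%C <= / r ^ Rr * (r / 2) ^ n.
Proof.
  rewrite Cmod_mult, Cmod_pow. eapply Rle_trans; [apply coef_pow_le|].
  rewrite inv_pow_mul_pow_add by lra.
  apply Rmult_le_compat_l; [apply inv_pow_nonneg; lra|].
  apply pow_incr. split; [apply pow_le; lra|]. simpl. nra.
Qed.

Lemma derivative_term_geom_bound (n : nat) :
  Cmod (RtoC (INR (S n)) * A (S n) * Cpow w n)%C <= / r ^ (Q + Rr) * (1 / 2) ^ n.
Proof.
  rewrite !Cmod_mult, Cmod_pow, Cmod_R, Rabs_pos_eq by apply pos_INR.
  rewrite Rmult_assoc.
  eapply Rle_trans; [apply Rmult_le_compat_l; [apply pos_INR | apply (coef_pow_le (S n) n)]|].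
  replace (S n * Q + Rr)%nat with (n * Q + (Q + Rr))%nat by lia.
  rewrite inv_pow_mul_pow_add by lra.
  assert (Hr3 : (r ^ 3) ^ n <= (1 / 4) ^ n).
  { apply pow_incr. split; [apply pow_le; lra|]. simpl. nra. }
  assert (Hhalf : 2 ^ n * (1 / 4) ^ n = (1 / 2) ^ n).
  { rewrite <- Rpow_mult_distr. f_equal. lra. }
  pose proof (INR_S_le_pow2 n).
  assert (0 <= / r ^ (Q + Rr)) by (apply inv_pow_nonneg; lra).
  assert (0 <= (r ^ 3) ^ n) by (apply pow_le, pow_le; lra).
  assert (INR (S n) * (r ^ 3) ^ n <= (1 / 2) ^ n).
  { rewrite <- Hhalf. apply Rmult_le_compat; auto using pos_INR. }
  nra.
Qed.

End Coefficient_bounds.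

Lemma nroot_ge0 (n : nat) (x : R) : 0 <= nroot n x.
Proof.
  unfold nroot. destruct (Req_EM_T x 0); [lra|]. left. apply exp_pos.
Qed.

Lemma nroot_le_pow (n k : nat) (x y : R) :
  (1 <= n)%nat -> 0 <= x -> 0 < y -> x <= y ^ (n * k) -> nroot n x <= y ^ k.
Proof.
  intros Hn Hx Hy Hxy. unfold nroot. destruct (Req_EM_T x 0); [apply pow_le; lra|].
  assert (0 < INR n) by (apply lt_0_INR; lia).
  eapply Rle_trans.
  - apply Rle_Rpower_l; [left; apply Rinv_0_lt_compat; lra | split; [lra | exact Hxy]].
  - rewrite <- Rpower_pow, Rpower_mult, mult_INR by lra.
    replace (INR n * INR k * / INR n) with (INR k) by (field; lra).
    rewrite Rpower_pow by lra. lra.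
Qed.

Lemma rad_ge_pow (a : nat -> R -> C) (e r : R) (Q Rr : nat) :
  0 < r <= 1 -> (forall n, Cmod (a n e) <= / r ^ (n * Q + Rr)) ->
  Rbar_le (Finite (r ^ (Q + 1))) (rad a e).
Proof.
  intros Hr HA. unfold rad.
  set (u := fun n => nroot n (Cmod (a n e))).
  assert (Hu0 : Rbar_le (Finite 0) (LimSup_seq u)).
  { rewrite <- (LimSup_seq_const 0). apply LimSup_le. exists O. intros n _. apply nroot_ge0. }
  assert (HuM : Rbar_le (LimSup_seq u) (Finite ((/ r) ^ (Q + 1)))).
  { rewrite <- (LimSup_seq_const ((/ r) ^ (Q + 1))). apply LimSup_le. exists (S Rr).
    intros n Hn. apply nroot_le_pow; [lia | apply Cmod_ge_0 | apply Rinv_0_lt_compat; lra |].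
    eapply Rle_trans; [apply HA|]. rewrite <- pow_inv.
    apply Rle_pow; [rewrite <- Rinv_1; apply Rinv_le_contravar; lra | nia]. }
  destruct (LimSup_seq u) as [l| |]; simpl in *; try contradiction.
  destruct (Req_EM_T l 0); simpl; [exact I|].
  rewrite pow_inv in HuM.
  assert (0 < r ^ (Q + 1)) by (apply pow_lt; lra).
  rewrite <- (Rinv_inv (r ^ (Q + 1))). apply Rinv_le_contravar; lra.
Qed.

Lemma ev_and (P Q : R -> Prop) : ev P -> ev Q -> ev (fun e => P e /\ Q e).
Proof.
  intros [a [Ha HP]] [b [Hb HQ]]. exists (Rmin a b). split.
  - now apply Rmin_glb_lt.
  - intros e He1 He2 He3. split.
    + apply HP; auto. eapply Rle_trans; [apply He2|apply Rmin_l].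
    + apply HQ; auto. eapply Rle_trans; [apply He2|apply Rmin_r].
Qed.

Lemma ev_mono (P Q : R -> Prop) : ev P -> (forall e, P e -> Q e) -> ev Q.
Proof. intros [a [Ha HP]] H. exists a. split; auto. Qed.

Lemma ev_gauge_half (rho : R -> R) : is_gauge rho -> ev (fun e => 0 < rho e <= 1/2).
Proof.
  intros [Hrange Hlim]. destruct (Hlim (1/2) ltac:(lra)) as [d [Hd Hlt]].
  exists (d/2). split; [lra|]. intros e He1 He2 He3. split.
  - apply Hrange; lra.
  - left. apply Hlt; lra.
Qed.

Lemma same_class_refl (rho : R -> R) (x : R -> C) : is_gauge rho -> same_class rho x x.
Proof.
  intros Hrho q. apply (ev_mono _ _ (ev_gauge_half rho Hrho)). intros e He.
  replace (x e - x e)%C with (RtoC 0) by ring. rewrite Cmod_0. apply pow_le; lra.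
Qed.

Lemma strongly_equiv_refl (rho : R -> R) (a : nat -> R -> C) :
  is_gauge rho -> strongly_equiv rho a a.
Proof.
  intros Hrho q r. apply (ev_mono _ _ (ev_gauge_half rho Hrho)). intros e He n.
  replace (a n e - a n e)%C with (RtoC 0) by ring. rewrite Cmod_0. apply pow_le; lra.
Qed.

Lemma hypernat_const (rho : R -> R) (k : nat) : is_gauge rho -> hypernat rho (fun _ => k).
Proof.
  intros Hrho. exists k. apply (ev_mono _ _ (ev_gauge_half rho Hrho)). intros e Hr.
  rewrite Rabs_pos_eq by apply pos_INR. rewrite <- pow_inv.
  apply Rle_trans with (2 ^ k).
  - pose proof (INR_S_le_pow2 k). rewrite S_INR in *. lra.
  - apply pow_incr. pose proof (two_le_inv _ Hr). lra.
Qed.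

(* The negligible slack in [M <= n] is eventually below 1, hence the successor. *)
Lemma Rt_le_INR_succ (rho : R -> R) (M n : R -> nat) :
  Rt_le rho (fun e => INR (M e)) (fun e => INR (n e)) -> ev (fun e => (M e <= S (n e))%nat).
Proof.
  intros [z [Hz Hle]]. apply (ev_mono _ _ (ev_and _ _ Hle (Hz O))). intros e [H1 H2].
  simpl in H2. apply INR_le. rewrite S_INR. pose proof (Rle_abs (z e)). lra.
Qed.

Lemma moderate_of_le_inv_pow (rho : R -> R) (x : R -> C) (k : nat) :
  ev (fun e => 0 < rho e <= 1/2 /\ Cmod (x e) <= 2 * / rho e ^ k) -> moderate rho x.
Proof.
  intros H. exists (S k). apply (ev_mono _ _ H). intros e [Hr Hx].
  simpl. rewrite Rinv_mult.
  assert (0 < / rho e ^ k) by (apply Rinv_0_lt_compat, pow_lt; lra).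
  pose proof (two_le_inv _ Hr). nra.
Qed.

Lemma Rt_lt_pow_of_le (rho : R -> R) (x : R -> R) (q : nat) :
  ev (fun e => 0 < rho e <= 1/2 /\ x e <= rho e ^ S q) ->
  Rt_lt rho x (fun e => rho e ^ q).
Proof.
  intros H. exists (S (S q)). apply (ev_mono _ _ H). intros e [Hr Hx].
  assert (0 < rho e ^ q) by (apply pow_lt; lra).
  simpl in *.
  assert (rho e * rho e ^ q <= rho e ^ q / 2) by nra.
  assert (rho e * (rho e * rho e ^ q) <= rho e ^ q / 4) by nra.
  lra.
Qed.

Lemma increment_le_of_same_class (rho : R -> R) (z zh c : R -> C) (q : nat) :
  Rt_lt rho (fun e => Cmod (z e - c e)%C) (fun e => rho e ^ q) -> same_class rho zh z ->
  ev (fun e => Cmod (zh e - c e)%C <= rho e ^ q).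
Proof.
  intros [m Hm] Hzh. apply (ev_mono _ _ (ev_and _ _ Hm (Hzh m))). intros e [Hzc Hzhz].
  replace (zh e - c e)%C with ((zh e - z e) + (z e - c e))%C by ring.
  eapply Rle_trans; [apply Cmod_triangle|]. lra.
Qed.

(* At such [e], [|a_n w^n| <= rho^-Rr (rho/2)^n]: the exponent [Q + 3] absorbs the growth
   [rho^-nQ] of the coefficients with room to spare. *)
Definition geometric_regime (rho : R -> R) (a : nat -> R -> C) (Q Rr : nat) (w : R -> C)
    (e : R) : Prop :=
  0 < rho e <= 1/2 /\ (forall n, Cmod (a n e) <= / rho e ^ (n * Q + Rr)) /\
  Cmod (w e) <= rho e ^ (Q + 3).

Section Near_center.

Variables (rho : R -> R) (a : nat -> R -> C) (Q Rr : nat) (w : R -> C).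

Lemma regime_power_term_bound (e : R) : geometric_regime rho a Q Rr w e ->
  forall n, Cmod (a n e * Cpow (w e) n)%C <= / rho e ^ Rr * (rho e / 2) ^ n.
Proof. intros [Hr [HA Hw]]. exact (power_term_geom_bound _ _ _ _ _ Hr HA Hw). Qed.

Lemma regime_derivative_term_bound (e : R) : geometric_regime rho a Q Rr w e ->
  forall n, Cmod (RtoC (INR (S n)) * a (S n) e * Cpow (w e) n)%C
            <= / rho e ^ (Q + Rr) * (1 / 2) ^ n.
Proof. intros [Hr [HA Hw]]. exact (derivative_term_geom_bound _ _ _ _ _ Hr HA Hw). Qed.

Hypothesis Hreg : ev (geometric_regime rho a Q Rr w).

Lemma rad_exceeds_increment : Rt_lt_inf rho (fun e => Cmod (w e)) (rad a).
Proof.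
  exists (Q + 3)%nat. apply (ev_mono _ _ Hreg). intros e [Hr [HA Hw]].
  eapply Rbar_lt_le_trans; [|apply (rad_ge_pow a e (rho e) Q Rr); [lra | exact HA]].
  simpl. replace (Q + 3)%nat with (Q + 1 + 2)%nat in * by lia. rewrite pow_add in *.
  assert (0 < rho e ^ (Q + 1)) by (apply pow_lt; lra).
  assert (rho e ^ 2 <= 1 / 4) by (simpl; nra).
  nra.
Qed.

Lemma power_terms_moderate_hypersums :
  moderate_hypersums rho (fun n e => (a n e * Cpow (w e) n)%C).
Proof.
  intros N _. apply (moderate_of_le_inv_pow _ _ Rr).
  apply (ev_mono _ _ Hreg). intros e He. pose proof (proj1 He) as Hr. split; [exact Hr|].
  apply (csum_geom_bound _ _ (rho e / 2));
    [apply inv_pow_nonneg; lra | lra | exact (regime_power_term_bound e He)].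
Qed.

Lemma power_series_hyperlimit (Hrho : is_gauge rho) :
  exists l : R -> C, moderate rho l /\
    ev (fun e => is_series (fun n => (a n e * Cpow (w e) n)%C) (l e)) /\
    hyperseries_lim rho (fun n e => (a n e * Cpow (w e) n)%C) l.
Proof.
  destruct (series_sum_net (fun e n => (a n e * Cpow (w e) n)%C)) as [l Hl].
  assert (Hsum : ev (fun e => geometric_regime rho a Q Rr w e /\
                   is_series (fun n => (a n e * Cpow (w e) n)%C) (l e))).
  { apply (ev_mono _ _ Hreg). intros e He. split; [exact He|]. apply Hl.
    apply (ex_series_geom_dominated _ (/ rho e ^ Rr) (rho e / 2));
      [destruct He; lra | exact (regime_power_term_bound e He)]. }
  exists l. split; [|split].
  - apply (moderate_of_le_inv_pow _ _ Rr). apply (ev_mono _ _ Hsum).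
    intros e [He HL]. pose proof (proj1 He) as Hr. split; [exact Hr|].
    apply (is_series_geom_bound (fun n => (a n e * Cpow (w e) n)%C) _ (rho e / 2));
      [apply inv_pow_nonneg; lra | lra | exact (regime_power_term_bound e He) | exact HL].
  - apply (ev_mono _ _ Hsum). tauto.
  - intros q. exists (fun _ => (Rr + q + 1)%nat). split; [apply hypernat_const, Hrho|].
    intros n _ Hn. apply Rt_lt_pow_of_le.
    apply (ev_mono _ _ (ev_and _ _ Hsum (Rt_le_INR_succ _ _ _ Hn))).
    intros e [[He HL] HMn]. pose proof (proj1 He) as Hr. split; [exact Hr|].
    eapply Rle_trans.
    + apply (is_series_tail_bound (fun n => (a n e * Cpow (w e) n)%C)
               (/ rho e ^ Rr) (rho e / 2));
        [apply inv_pow_nonneg; lra | lra | exact (regime_power_term_bound e He) | exact HL].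
    + apply geom_tail_le; [exact Hr | lia].
Qed.

Lemma derivative_series_moderate :
  exists d : R -> C, moderate rho d /\
    ev (fun e => is_series (fun n => (RtoC (INR (S n)) * a (S n) e * Cpow (w e) n)%C) (d e)).
Proof.
  set (f := fun e n => (RtoC (INR (S n)) * a (S n) e * Cpow (w e) n)%C).
  destruct (series_sum_net f) as [d Hd].
  assert (Hsum : ev (fun e => geometric_regime rho a Q Rr w e /\ is_series (f e) (d e))).
  { apply (ev_mono _ _ Hreg). intros e He. split; [exact He|]. apply Hd.
    apply (ex_series_geom_dominated _ (/ rho e ^ (Q + Rr)) (1 / 2));
      [lra | exact (regime_derivative_term_bound e He)]. }
  exists d. split; [|apply (ev_mono _ _ Hsum); tauto].
  apply (moderate_of_le_inv_pow _ _ (Q + Rr)). apply (ev_mono _ _ Hsum).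
  intros e [He HL]. pose proof (proj1 He) as Hr. split; [exact Hr|].
  apply (is_series_geom_bound (f e) _ (1 / 2));
    [apply inv_pow_nonneg; lra | lra | exact (regime_derivative_term_bound e He) | exact HL].
Qed.

End Near_center.

Theorem theorem2p26 (rho : R -> R) (Hrho : is_gauge rho)
  (a : nat -> R -> C) (Ha : weakly_moderate rho a)
  (c : R -> C) (Hc : moderate rho c) :
  exists q : nat, forall z : R -> C, moderate rho z ->
    Rt_lt rho (fun e => Cmod (z e - c e)%C) (fun e => rho e ^ q) ->
    in_S rho a c z.
Proof.
  destruct Ha as [Q [Rr Ha]].
  exists (Q + 3)%nat.
  (* Everything depends on [z - c] only. *)
  intros z _ Hzc.
  assert (Hreg : forall zh, same_class rho zh z ->
            ev (geometric_regime rho a Q Rr (fun e => (zh e - c e)%C))).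
  { intros zh Hzh.
    exact (ev_and _ _ (ev_gauge_half rho Hrho)
             (ev_and _ _ Ha (increment_le_of_same_class rho z zh c _ Hzc Hzh))). }
  pose proof (Hreg z (same_class_refl rho z Hrho)) as Hz.
  split; [exact (rad_exceeds_increment _ _ _ _ _ Hz)|].
  exists z, c, a.
  split; [apply same_class_refl, Hrho|].
  split; [apply same_class_refl, Hrho|].
  split; [exists Q, Rr; exact Ha|].
  split; [apply strongly_equiv_refl, Hrho|].
  split; [exact (power_terms_moderate_hypersums _ _ _ _ _ Hz)|].
  split; [exact (power_series_hyperlimit _ _ _ _ _ Hz Hrho)|].
  intros zh Hzh. exact (derivative_series_moderate _ _ _ _ _ (Hreg zh Hzh)).
Qed.
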